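(* Let $p$ be an odd prime and let $O_2^+(\mathbb{F}_p)\subset GL_2(\mathbb{F}_p)$ be the group generated by $\xi=\begin{pmatrix}0&1\\1&0\end{pmatrix}$ and $\operatorname{diag}(c,c^{-1})$, $c\in\mathbb{F}_p^\times$ (the orthogonal group of the quadratic form $x_1x_2$, of order $2(p-1)$). It acts on $\mathbb{F}_p[x_1,x_2,y_1,y_2]$ by: $\xi$ swaps $x_1\leftrightarrow x_2$ and $y_1\leftrightarrow y_2$; $\operatorname{diag}(c,c^{-1})$ sends $x_1\mapsto cx_1,\ x_2\mapsto c^{-1}x_2,\ y_1\mapsto c^{-1}y_1,\ y_2\mapsto cy_2$. Then the invariant ring $\mathbb{F}_p[x_1,x_2,y_1,y_2]^{O_2^+(\mathbb{F}_p)}$ is generated as an $\mathbb{F}_p$-algebra by $$\{x_1x_2,\ y_1y_2,\ x_1y_1+x_2y_2,\ x_1^{p-1-i}y_2^i+x_2^{p-1-i}y_1^i \mid 0\le i\le p-1\}.$$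
   Context: This is the natural action on $\mathbb{F}_p[V\oplus V^*]$, $V=\mathbb{F}_p^2$: $x_1,x_2$ transform by $(x_1,x_2)^T\mapsto g(x_1,x_2)^T$ and $y_1,y_2$ by $(y_1,y_2)^T\mapsto (g^T)^{-1}(y_1,y_2)^T$, extended to $\mathbb{F}_p$-algebra automorphisms. *)

From HB Require Import structures.
From mathcomp Require Import all_boot all_order all_algebra all_field.
From mathcomp Require Import mpoly.
Set Implicit Arguments. Unset Strict Implicit. Unset Printing Implicit Defensive.
Import GRing.Theory.
Local Open Scope ring_scope.

Definition vx1 : 'I_4 := inord 0.
Definition vx2 : 'I_4 := inord 1.
Definition vy1 : 'I_4 := inord 2.
Definition vy2 : 'I_4 := inord 3.

Section Def.
Variable F : fieldType.

Notation P4 := {mpoly F[4]}.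

(* Natural action of g in GL_2 on F[V + V^*]:
   (x1,x2)^T |-> g (x1,x2)^T and (y1,y2)^T |-> (g^T)^{-1} (y1,y2)^T,
   extended to an F-algebra endomorphism (substitution). *)
Definition act_images (g : 'M[F]_2) : 4.-tuple P4 :=
  let h := invmx g^T in
  [tuple g 0 0 *: 'X_vx1 + g 0 1 *: 'X_vx2;
         g 1 0 *: 'X_vx1 + g 1 1 *: 'X_vx2;
         h 0 0 *: 'X_vy1 + h 0 1 *: 'X_vy2;
         h 1 0 *: 'X_vy1 + h 1 1 *: 'X_vy2].

Definition act (g : 'M[F]_2) (f : P4) : P4 := comp_mpoly (act_images g) f.

Definition xi_mx : 'M[F]_2 := \matrix_(i < 2, j < 2) (if i == j then 0 else 1).
Definition dg_mx (c : F) : 'M[F]_2 :=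
  \matrix_(i < 2, j < 2) (if i == j then (if i == 0 then c else c^-1) else 0).

Inductive O2plus : 'M[F]_2 -> Prop :=
  | O2_xi : O2plus xi_mx
  | O2_dg (c : F) : c != 0 -> O2plus (dg_mx c)
  | O2_one : O2plus 1%:M
  | O2_mul g h : O2plus g -> O2plus h -> O2plus (g *m h)
  | O2_inv g : O2plus g -> O2plus (invmx g).

Definition O2_invariant (f : P4) : Prop := forall g, O2plus g -> act g f = f.

Definition gen_list (p : nat) : seq P4 :=
  [:: 'X_vx1 * 'X_vx2; 'X_vy1 * 'X_vy2; 'X_vx1 * 'X_vy1 + 'X_vx2 * 'X_vy2]
  ++ [seq 'X_vx1 ^+ (p.-1 - i) * 'X_vy2 ^+ i + 'X_vx2 ^+ (p.-1 - i) * 'X_vy1 ^+ i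
       | i <- iota 0 p].

Lemma size_gen_list p : size (gen_list p) = (p + 3)%N.
Proof. by rewrite /gen_list size_cat size_map size_iota addnC. Qed.

Definition gens (p : nat) : (p + 3).-tuple P4 := Tuple (introT eqP (size_gen_list p)).

Definition in_gen_subalg (p : nat) (f : P4) : Prop :=
  exists P : {mpoly F[p + 3]}, f = comp_mpoly (gens p) P.

End Def.

From HB Require Import structures.
From mathcomp Require Import all_boot all_order all_algebra all_field.
From mathcomp Require Import cyclic mpoly ring zify.
Set Implicit Arguments. Unset Strict Implicit. Unset Printing Implicit Defensive.
Import GRing.Theory.
Local Open Scope ring_scope.

(* Every element of O_2^+ is diag(c, c^-1) or xi diag(c, c^-1), so f is invariant
   iff it is fixed by the swap xi and by every diag(c, c^-1). The latter scales the
   monomial x1^a x2^b y1^c y2^d by c^(a+d-b-c); over a field with q elements this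
   is 1 for all c exactly when a + d = b + c mod q - 1, since the multiplicative
   group is cyclic of order q - 1. Hence, when 2 is invertible, an invariant is a
   combination of xi-orbit sums of such balanced monomials, and each of these lies
   in the subalgebra by induction on the degree: factor out x1x2 or y1y2 when
   possible, use x1y1 + x2y2 to move mass off the "mixed" shape x1^a y1^c, and for
   the "pure" shape x1^a y2^d (a + d a positive multiple of q - 1) split off one
   generator x1^i y2^(q-1-i) + x2^i y1^(q-1-i). *)

Section O2Elements.
Variable F : fieldType.

Lemma mx2_ext (A B : 'M[F]_2) :
  A 0 0 = B 0 0 -> A 0 1 = B 0 1 -> A 1 0 = B 1 0 -> A 1 1 = B 1 1 -> A = B.
Proof.
have ord2P (i : 'I_2) : i = 0 \/ i = 1.
  by case: i => [[|[|//]] hi]; [left|right]; apply/val_inj.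
move=> h00 h01 h10 h11; apply/matrixP=> i j.
by case: (ord2P i) => ->; case: (ord2P j) => ->.
Qed.

Lemma mulmx1_invmx (A B : 'M[F]_2) : A *m B = 1%:M -> invmx A = B.
Proof.
move=> AB; have [Au _] := mulmx1_unit AB.
by rewrite -[invmx A]mulmx1 -AB mulmxA mulVmx // mul1mx.
Qed.

Local Ltac mx2_simpl := apply: mx2_ext; rewrite !mxE ?big_ord_recl ?big_ord0 ?mxE /=;
  rewrite ?mulr0 ?mul0r ?addr0 ?add0r ?mulr1 ?mul1r ?invfM ?invrK ?invr1.

Lemma dg_mxM (c d : F) : dg_mx c *m dg_mx d = dg_mx (c * d).
Proof. by mx2_simpl. Qed.

Lemma dg_mx1 : dg_mx (1 : F) = 1%:M.
Proof. by mx2_simpl. Qed.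

Lemma xi_mxK : xi_mx F *m xi_mx F = 1%:M.
Proof. by mx2_simpl. Qed.

Lemma dg_mx_xi (c : F) : dg_mx c *m xi_mx F = xi_mx F *m dg_mx c^-1.
Proof. by mx2_simpl. Qed.

Lemma tr_dg_mx (c : F) : (dg_mx c)^T = dg_mx c.
Proof. by mx2_simpl. Qed.

Lemma tr_xi_mx : (xi_mx F)^T = xi_mx F.
Proof. by mx2_simpl. Qed.

Lemma invmx_dg (c : F) : c != 0 -> invmx (dg_mx c) = dg_mx c^-1.
Proof. by move=> c0; apply: mulmx1_invmx; rewrite dg_mxM divff // dg_mx1. Qed.

Lemma xi_dg_mxE (c : F) : xi_mx F *m dg_mx c =
  \matrix_(i < 2, j < 2) (if i == j then 0 else if i == 0 then c^-1 else c).
Proof. by mx2_simpl. Qed.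

Lemma xi_dg_mxK (c : F) : c != 0 ->
  (xi_mx F *m dg_mx c) *m (xi_mx F *m dg_mx c) = 1%:M.
Proof.
move=> c0; rewrite mulmxA -(mulmxA _ (dg_mx c)) dg_mx_xi mulmxA xi_mxK mul1mx.
by rewrite dg_mxM mulVf // dg_mx1.
Qed.

Lemma invmx_tr_xi_dg (c : F) : c != 0 ->
  invmx (xi_mx F *m dg_mx c)^T = xi_mx F *m dg_mx c^-1.
Proof.
move=> c0; rewrite trmx_mul tr_dg_mx tr_xi_mx dg_mx_xi.
by apply: mulmx1_invmx; rewrite xi_dg_mxK ?invr_eq0.
Qed.

Lemma O2plusP g : O2plus g ->
  exists2 c : F, c != 0 & g = dg_mx c \/ g = xi_mx F *m dg_mx c.
Proof.
elim=> {g}.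
- by exists 1; rewrite ?oner_neq0 // dg_mx1 mulmx1; right.
- by move=> c c0; exists c => //; left.
- by exists 1; rewrite ?oner_neq0 // dg_mx1; left.
- move=> g h _ [c c0 [->|->]] _ [d d0 [->|->]].
  + by exists (c * d); [rewrite mulf_neq0 | left; rewrite dg_mxM].
  + exists (c^-1 * d); first by rewrite mulf_neq0 ?invr_eq0.
    by right; rewrite mulmxA dg_mx_xi -mulmxA dg_mxM.
  + by exists (c * d); [rewrite mulf_neq0 | right; rewrite -mulmxA dg_mxM].
  + exists (c^-1 * d); first by rewrite mulf_neq0 ?invr_eq0.
    left; rewrite -mulmxA (mulmxA (dg_mx c)) dg_mx_xi -!mulmxA dg_mxM.
    by rewrite mulmxA xi_mxK mul1mx.
- move=> g _ [c c0 [->|->]].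
  + by exists c^-1; [rewrite invr_eq0 | left; rewrite invmx_dg].
  + by exists c => //; right; apply: mulmx1_invmx; rewrite xi_dg_mxK.
Qed.

End O2Elements.

Section Action.
Variable F : fieldType.
Local Notation P4 := {mpoly F[4]}.
Local Notation X1 := ('X_vx1 : P4).
Local Notation X2 := ('X_vx2 : P4).
Local Notation Y1 := ('X_vy1 : P4).
Local Notation Y2 := ('X_vy2 : P4).

Definition xmon (a b c d : nat) : P4 := X1 ^+ a * X2 ^+ b * Y1 ^+ c * Y2 ^+ d.

Definition orbit_sum (a b c d : nat) : P4 := xmon a b c d + xmon b a d c.

Definition dg_factor (c : F) (a b cc d : nat) : F := c ^+ (a + d) / c ^+ (b + cc).

Lemma mpolyX_xmon (m : 'X_{1..4}) : 'X_[m] = xmon (m vx1) (m vx2) (m vy1) (m vy2).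
Proof.
rewrite mpolyXE_id !big_ord_recl big_ord0 mulr1 /xmon !mulrA.
have -> : vx1 = ord0 by apply/val_inj; rewrite /= inordK.
have -> : vx2 = lift ord0 ord0 by apply/val_inj; rewrite /= inordK.
have -> : vy1 = lift ord0 (lift ord0 ord0) by apply/val_inj; rewrite /= inordK.
suff -> : vy2 = lift ord0 (lift ord0 (lift ord0 ord0)) by [].
by apply/val_inj; rewrite /= inordK.
Qed.

Lemma act_xmon (g : 'M[F]_2) a b cc d : act g (xmon a b cc d) =
  act g X1 ^+ a * act g X2 ^+ b * act g Y1 ^+ cc * act g Y2 ^+ d.
Proof. by rewrite /act /xmon !rmorphM !rmorphXn. Qed.

Lemma actD (g : 'M[F]_2) (u v : P4) : act g (u + v) = act g u + act g v.
Proof. exact: raddfD. Qed.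

Lemma act_X1 (g : 'M[F]_2) : act g X1 = g 0 0 *: X1 + g 0 1 *: X2.
Proof. by rewrite /act comp_mpolyXU /vx1 inordK. Qed.

Lemma act_X2 (g : 'M[F]_2) : act g X2 = g 1 0 *: X1 + g 1 1 *: X2.
Proof. by rewrite /act comp_mpolyXU /vx2 inordK. Qed.

Lemma act_Y1 (g : 'M[F]_2) : act g Y1 = (invmx g^T) 0 0 *: Y1 + (invmx g^T) 0 1 *: Y2.
Proof. by rewrite /act comp_mpolyXU /vy1 inordK. Qed.

Lemma act_Y2 (g : 'M[F]_2) : act g Y2 = (invmx g^T) 1 0 *: Y1 + (invmx g^T) 1 1 *: Y2.
Proof. by rewrite /act comp_mpolyXU /vy2 inordK. Qed.

Lemma act_dg_xmon (c : F) a b cc d : c != 0 ->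
  act (dg_mx c) (xmon a b cc d) = dg_factor c a b cc d *: xmon a b cc d.
Proof.
move=> c0; rewrite act_xmon act_X1 act_X2 act_Y1 act_Y2 tr_dg_mx invmx_dg // !mxE /=.
rewrite !scale0r !addr0 !add0r !exprZn invrK.
do 3! rewrite -?scalerAl -?scalerAr ?scalerA.
by congr (_ *: _); rewrite /dg_factor !exprD !exprVn; field; rewrite !expf_neq0.
Qed.

Lemma act_xi_dg_xmon (c : F) a b cc d : c != 0 ->
  act (xi_mx F *m dg_mx c) (xmon a b cc d) = act (dg_mx c) (xmon b a d cc).
Proof.
move=> c0; rewrite act_dg_xmon // act_xmon act_X1 act_X2 act_Y1 act_Y2.
rewrite invmx_tr_xi_dg // !xi_dg_mxE !mxE /= invrK.
rewrite !scale0r !addr0 !add0r !exprZn.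
do 3! rewrite -?scalerAl -?scalerAr ?scalerA.
congr (_ *: _); last by rewrite /xmon; ring.
by rewrite /dg_factor !exprD !exprVn; field; rewrite !expf_neq0.
Qed.

Lemma act_xi_xmon a b cc d : act (xi_mx F) (xmon a b cc d) = xmon b a d cc.
Proof.
rewrite -[xi_mx F]mulmx1 -dg_mx1 act_xi_dg_xmon ?oner_neq0 // act_dg_xmon ?oner_neq0 //.
by rewrite /dg_factor !expr1n divr1 scale1r.
Qed.

Lemma act_xi_dg (c : F) (f : P4) : c != 0 ->
  act (xi_mx F *m dg_mx c) f = act (dg_mx c) (act (xi_mx F) f).
Proof.
move=> c0; rewrite {3}/act comp_mpolyEX /act comp_mpolyEX raddf_sum.
apply: eq_bigr => m _.
by rewrite /= comp_mpolyZ -!/(act _ _) mpolyX_xmon act_xi_dg_xmon // act_xi_xmon.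
Qed.

Lemma O2_invariantP (f : P4) : O2_invariant f <->
  act (xi_mx F) f = f /\ forall c : F, c != 0 -> act (dg_mx c) f = f.
Proof.
split=> [inv_f | [inv_xi inv_dg] g /O2plusP [c c0 [->|->]]].
- by split=> [|c c0]; apply: inv_f; constructor.
- exact: inv_dg.
- by rewrite act_xi_dg // inv_xi inv_dg.
Qed.

End Action.

Section OrbitSums.
Variable F : fieldType.
Local Notation orbit_sum := (@orbit_sum F).
Local Notation xmon := (@xmon F).

Lemma xmonM a b c d a' b' c' d' :
  xmon a b c d * xmon a' b' c' d' = xmon (a + a') (b + b') (c + c') (d + d').
Proof. by rewrite /xmon !exprD; ring. Qed.

Lemma orbit_sumC a b c d : orbit_sum b a d c = orbit_sum a b c d.
Proof. exact: addrC. Qed.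

Lemma orbit_sum_x1x2 a b c d : orbit_sum a.+1 b.+1 c d = xmon 1 1 0 0 * orbit_sum a b c d.
Proof. by rewrite /orbit_sum mulrDr !xmonM. Qed.

Lemma orbit_sum_y1y2 a b c d : orbit_sum a b c.+1 d.+1 = xmon 0 0 1 1 * orbit_sum a b c d.
Proof. by rewrite /orbit_sum mulrDr !xmonM. Qed.

Lemma orbit_sum_pairing a b c d :
  orbit_sum a.+1 b c.+1 d =
  orbit_sum 1 0 1 0 * orbit_sum a b c d - orbit_sum a b.+1 c d.+1.
Proof.
by rewrite /orbit_sum mulrDr !mulrDl !xmonM ?add0n ?addn0 ?add1n ?addn1; ring.
Qed.

Lemma orbit_sum_split a1 d1 a2 d2 :
  orbit_sum (a1 + a2) 0 0 (d1 + d2) =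
  orbit_sum a1 0 0 d1 * orbit_sum a2 0 0 d2 - orbit_sum a1 a2 d2 d1.
Proof.
by rewrite /orbit_sum mulrDr !mulrDl !xmonM ?add0n ?addn0; ring.
Qed.

Lemma gen_listE n : gen_list F n =
  [:: xmon 1 1 0 0; xmon 0 0 1 1; orbit_sum 1 0 1 0]
  ++ [seq orbit_sum (n.-1 - i) 0 0 i | i <- iota 0 n].
Proof.
rewrite /gen_list /orbit_sum /xmon !expr0 !expr1 !mulr1 !mul1r.
by congr (_ :: _ :: _ :: _); apply: eq_map => i; rewrite ?expr0 ?mulr1 ?mul1r.
Qed.

Lemma xi_symmetrize (f : {mpoly F[4]}) :
  f + act (xi_mx F) f =
  \sum_(m <- msupp f) f@_m *: orbit_sum (m vx1) (m vx2) (m vy1) (m vy2).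
Proof.
rewrite /act comp_mpolyEX {1}[f]mpolyE -big_split /=.
apply: eq_bigr => m _; rewrite -scalerDr (_ : 'X_[m] \mPo _ = act (xi_mx F) 'X_[m]) //.
by rewrite mpolyX_xmon act_xi_xmon.
Qed.

End OrbitSums.

Definition balanced (q a b c d : nat) := a + d == b + c %[mod q].

Lemma balanced_sym q a b c d : balanced q b a d c = balanced q a b c d.
Proof. exact: eq_sym. Qed.

Lemma eqn_modSS d m n : (m.+1 == n.+1 %[mod d]) = (m == n %[mod d]).
Proof. by rewrite -[m.+1]addn1 -[n.+1]addn1 eqn_modDr. Qed.

Lemma balanced_x1x2 q a b c d : balanced q a.+1 b.+1 c d = balanced q a b c d.
Proof. by rewrite /balanced !addSn eqn_modSS. Qed.

Lemma balanced_y1y2 q a b c d : balanced q a b c.+1 d.+1 = balanced q a b c d.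
Proof. by rewrite /balanced !addnS eqn_modSS. Qed.

Lemma balanced_x1y1 q a b c d : balanced q a.+1 b c.+1 d = balanced q a b c d.
Proof. by rewrite /balanced addSn addnS eqn_modSS. Qed.

Lemma balanced_x2y2 q a b c d : balanced q a b.+1 c d.+1 = balanced q a b c d.
Proof. by rewrite /balanced addSn addnS eqn_modSS. Qed.

Lemma balanced_pure q a d : balanced q a 0 0 d = (q %| a + d)%N.
Proof. by rewrite /balanced add0n mod0n. Qed.

Section Subalgebra.
Variables (F : fieldType) (p : nat).
Local Notation A := (@in_gen_subalg F p).
Local Notation orbit_sum := (@orbit_sum F).
Local Notation xmon := (@xmon F).

Lemma in_gen_subalgD u v : A u -> A v -> A (u + v).
Proof. by move=> [P ->] [Q ->]; exists (P + Q); rewrite raddfD. Qed.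

Lemma in_gen_subalgB u v : A u -> A v -> A (u - v).
Proof. by move=> [P ->] [Q ->]; exists (P - Q); rewrite raddfB. Qed.

Lemma in_gen_subalgM u v : A u -> A v -> A (u * v).
Proof. by move=> [P ->] [Q ->]; exists (P * Q); rewrite rmorphM. Qed.

Lemma in_gen_subalgZ k u : A u -> A (k *: u).
Proof. by move=> [P ->]; exists (k *: P); rewrite linearZ. Qed.

Lemma in_gen_subalg1 : A 1.
Proof. by exists 1; rewrite comp_mpoly1. Qed.

Lemma in_gen_subalg0 : A 0.
Proof. by exists 0; rewrite comp_mpoly0. Qed.

Lemma in_gen_subalg_gen u : u \in gen_list F p -> A u.
Proof.
move=> /(nthP 0) [j lt_j <-]; have lt_j' : (j < p + 3)%N by rewrite -(size_gen_list F p).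
by exists 'X_(Ordinal lt_j'); rewrite comp_mpolyXU.
Qed.

Lemma in_gen_subalg_x1x2 : A (xmon 1 1 0 0).
Proof. by apply: in_gen_subalg_gen; rewrite gen_listE mem_cat !inE eqxx. Qed.

Lemma in_gen_subalg_y1y2 : A (xmon 0 0 1 1).
Proof. by apply: in_gen_subalg_gen; rewrite gen_listE mem_cat !inE eqxx orbT. Qed.

Lemma in_gen_subalg_pairing : A (orbit_sum 1 0 1 0).
Proof. by apply: in_gen_subalg_gen; rewrite gen_listE mem_cat !inE eqxx !orbT. Qed.

Lemma in_gen_subalg_pure i : (i < p)%N -> A (orbit_sum (p.-1 - i) 0 0 i).
Proof.
move=> lt_ip; apply: in_gen_subalg_gen; rewrite gen_listE mem_cat; apply/orP; right.
by apply/mapP; exists i; rewrite ?mem_iota.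
Qed.

End Subalgebra.

Section Reduction.
Variables (F : fieldType) (p : nat).
Hypothesis p_gt1 : (1 < p)%N.
Local Notation A := (@in_gen_subalg F p).
Local Notation orbit_sum := (@orbit_sum F).
Local Notation balanced := (balanced p.-1).

Section InductionStep.
Variable N : nat.
Hypothesis IH : forall a b c d,
  (a + b + c + d < N)%N -> balanced a b c d -> A (orbit_sum a b c d).

Lemma step_x1x2 a b c d : (a.+1 + b.+1 + c + d <= N)%N ->
  balanced a.+1 b.+1 c d -> A (orbit_sum a.+1 b.+1 c d).
Proof.
rewrite balanced_x1x2 orbit_sum_x1x2 => deg bal.
by apply: in_gen_subalgM (in_gen_subalg_x1x2 _ _) (IH _ bal); lia.
Qed.

Lemma step_y1y2 a b c d : (a + b + c.+1 + d.+1 <= N)%N ->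
  balanced a b c.+1 d.+1 -> A (orbit_sum a b c.+1 d.+1).
Proof.
rewrite balanced_y1y2 orbit_sum_y1y2 => deg bal.
by apply: in_gen_subalgM (in_gen_subalg_y1y2 _ _) (IH _ bal); lia.
Qed.

Lemma step_mixed a c : (a.+1 + c.+1 <= N)%N ->
  balanced a.+1 0 c.+1 0 -> A (orbit_sum a.+1 0 c.+1 0).
Proof.
rewrite balanced_x1y1 orbit_sum_pairing => deg bal.
apply: in_gen_subalgB.
  by apply: in_gen_subalgM (in_gen_subalg_pairing _ _) (IH _ bal); lia.
case: a deg bal => [|a] deg bal.
  case: c deg bal => [|c] deg bal.
    by rewrite -orbit_sumC; apply: in_gen_subalg_pairing.
  by apply: step_y1y2; [lia | rewrite balanced_x2y2].
by apply: step_x1x2; [lia | rewrite balanced_x2y2].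
Qed.

Lemma step_nonpure a b c d : (a + b + c + d <= N)%N -> balanced a b c d ->
  (0 < a + d)%N -> (0 < b + c)%N -> A (orbit_sum a b c d).
Proof.
case: a b => [|a] [|b] deg bal ad_gt0 bc_gt0; last exact: step_x1x2.
all: case: c d deg bal ad_gt0 bc_gt0 => [|c] [|d] deg bal ad_gt0 bc_gt0 //.
- exact: step_y1y2.
- by rewrite -orbit_sumC; apply: step_mixed; [lia | rewrite balanced_sym].
- exact: step_y1y2.
- by apply: step_mixed => //; lia.
- exact: step_y1y2.
Qed.

Lemma step_pure a d : (a + d <= N)%N -> balanced a 0 0 d -> A (orbit_sum a 0 0 d).
Proof.
rewrite balanced_pure => deg dvd_ad.
have [ad0 | ad_gt0] := posnP (a + d).
  have [-> ->] : a = 0%N /\ d = 0%N by lia.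
  suff -> : orbit_sum 0 0 0 0 = 1 + 1 by apply: in_gen_subalgD; apply: in_gen_subalg1.
  by rewrite /orbit_sum /xmon !expr0 !mulr1.
have := dvdn_leq ad_gt0 dvd_ad; rewrite leq_eqVlt => /orP[/eqP ad_p | ad_gt_p].
  by rewrite (_ : a = p.-1 - d)%N; [apply: in_gen_subalg_pure | ]; lia.
(* split off a factor of total degree p - 1 *)
pose a1 := minn a p.-1; pose d1 := (p.-1 - a1)%N.
have [a2 [d2 [ea ed a2d2]]] : exists a2 d2,
    [/\ a = (a1 + a2)%N, d = (d1 + d2)%N & (a2 + d2 = a + d - p.-1)%N].
  by exists (a - a1)%N, (d - d1)%N; split; rewrite /d1 /a1; lia.
have dvd_p1 : (p.-1 %| a1 + d1)%N by rewrite /d1 subnKC ?geq_minr.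
have dvd_2 : (p.-1 %| a2 + d2)%N by rewrite a2d2 dvdn_sub ?dvdnn.
rewrite ea ed orbit_sum_split; apply: in_gen_subalgB; first apply: in_gen_subalgM.
- by apply: IH; [lia | rewrite balanced_pure].
- by apply: IH; [lia | rewrite balanced_pure].
- apply: step_nonpure; try lia.
  by rewrite /balanced (eqP dvd_p1) (eqP dvd_2).
Qed.

End InductionStep.

Lemma orbit_sum_in_gen_subalg a b c d : balanced a b c d -> A (orbit_sum a b c d).
Proof.
suff step N : forall a b c d,
    (a + b + c + d < N)%N -> balanced a b c d -> A (orbit_sum a b c d).
  exact: step.
elim: N => [//|N IH] {}a {}b {}c {}d; rewrite ltnS => deg bal.
have [bc0 | bc_gt0] := posnP (b + c).
  have [b0 c0] : b = 0%N /\ c = 0%N by lia.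
  subst b c.
  by apply: (step_pure IH) bal; lia.
have [ad0 | ad_gt0] := posnP (a + d).
  have [a0 d0] : a = 0%N /\ d = 0%N by lia.
  subst a d.
  by rewrite -orbit_sumC; apply: (step_pure IH); [lia | rewrite balanced_sym].
exact: (step_nonpure IH deg bal ad_gt0 bc_gt0).
Qed.

End Reduction.

Lemma mcoeff_sum_rescale (R : nzRingType) n (f : {mpoly R[n]}) (h : 'X_{1..n} -> R) m :
  (\sum_(m' <- msupp f) (f@_m' * h m') *: 'X_[m'])@_m = f@_m * h m.
Proof.
rewrite raddf_sum /=.
under eq_bigr => m' _ do rewrite mcoeffZ mcoeffX.
case: (boolP (m \in msupp f)) => [supp_m | nsupp_m].
  rewrite (bigD1_seq m) //= eqxx mulr1 big1 ?addr0 // => m' /negbTE ->.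
  by rewrite mulr0.
rewrite (memN_msupp_eq0 nsupp_m) mul0r big1_seq // => m' /andP[_ supp_m'].
by case: eqP => [eq_m | _]; rewrite ?mulr0 //; move: nsupp_m; rewrite -eq_m supp_m'.
Qed.

Section FiniteField.
Variable F : finFieldType.
Local Notation q := #|F|.
Local Notation orbit_sum := (@orbit_sum F).
Local Notation xmon := (@xmon F).

Lemma expf_card_pred (c : F) : c != 0 -> c ^+ q.-1 = 1.
Proof.
move=> c0; apply: (mulfI c0); rewrite mulr1 -exprS prednK ?expf_card //.
exact: ltnW (finNzRing_gt1 F).
Qed.

Lemma eq_expf_mod x y :
  (forall c : F, c != 0 -> c ^+ x = c ^+ y) <-> x = y %[mod q.-1].
Proof.
split=> [eq_xy | eq_xy c c0]; last first.
  have expf_mod k : c ^+ k = c ^+ (k %% q.-1).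
    by rewrite {1}(divn_eq k q.-1) exprD mulnC exprM expf_card_pred // expr1n mul1r.
  by rewrite expf_mod eq_xy -expf_mod.
have q1_gt0 : (0 < q.-1)%N by rewrite -ltnS prednK ?finNzRing_gt1 // ltnW ?finNzRing_gt1.
have /hasP[z] : has q.-1.-primitive_root (enum (predC1 (0 : F))).
  apply: has_prim_root => //; last by rewrite -cardE cardC1.
  - apply/allP => c; rewrite mem_enum => c0.
    by rewrite unity_rootE expf_card_pred.
  - exact: enum_uniq.
rewrite mem_enum => z0 prim_z.
by apply/eqP; rewrite -(eq_prim_root_expr prim_z) eq_xy.
Qed.

Lemma dg_factor_eq1P a b c d :
  (forall e : F, e != 0 -> dg_factor e a b c d = 1) <-> balanced q.-1 a b c d.
Proof.
rewrite /balanced -(rwP eqP) -eq_expf_mod /dg_factor.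
split=> eq1 e e0; first exact/divr1_eq/eq1.
by rewrite eq1 // divff // expf_neq0.
Qed.

Lemma xmon_O2_invariant a c : O2_invariant (xmon a a c c).
Proof.
apply/O2_invariantP; split=> [|e e0]; first exact: act_xi_xmon.
by rewrite act_dg_xmon // /dg_factor addnC divff ?scale1r // expf_neq0.
Qed.

Lemma orbit_sum_O2_invariant a b c d :
  balanced q.-1 a b c d -> O2_invariant (orbit_sum a b c d).
Proof.
move=> /[dup] bal /dg_factor_eq1P factor1; apply/O2_invariantP; split=> [|e e0].
  by rewrite actD !act_xi_xmon addrC.
move: bal; rewrite -balanced_sym => /dg_factor_eq1P factor1'.
by rewrite actD !act_dg_xmon // factor1 // factor1' // !scale1r.
Qed.

Lemma gen_list_O2_invariant g : g \in gen_list F q -> O2_invariant g.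
Proof.
rewrite gen_listE mem_cat !inE => /orP[/or3P[] /eqP -> | /mapP[i]].
- exact: xmon_O2_invariant.
- exact: xmon_O2_invariant.
- by apply: orbit_sum_O2_invariant; rewrite /balanced addn0 add0n.
rewrite mem_iota add0n => /andP[_ lt_iq] ->; apply: orbit_sum_O2_invariant.
by rewrite balanced_pure subnK ?dvdnn //; lia.
Qed.

Lemma in_gen_subalg_O2_invariant (f : {mpoly F[4]}) : in_gen_subalg q f -> O2_invariant f.
Proof.
move=> [P ->] g O2g; rewrite [in LHS]comp_mpolyE /act raddf_sum /= [RHS]comp_mpolyE.
apply: eq_bigr => m _; rewrite linearZ /= rmorph_prod; congr (_ *: _).
apply: eq_bigr => i _; rewrite rmorphXn; congr (_ ^+ _).
exact: gen_list_O2_invariant (mem_tnth i (gens F q)) _ O2g.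
Qed.

Lemma O2_invariant_balanced (f : {mpoly F[4]}) m : O2_invariant f -> m \in msupp f ->
  balanced q.-1 (m vx1) (m vx2) (m vy1) (m vy2).
Proof.
move=> /O2_invariantP[_ inv_dg] supp_m; apply/dg_factor_eq1P => e e0.
have := inv_dg e e0; rewrite {1}[f]mpolyE /act raddf_sum /=.
under eq_bigr => m' _ do
  rewrite comp_mpolyZ -/(act _ _) mpolyX_xmon act_dg_xmon // scalerA -mpolyX_xmon.
move=> /(congr1 (mcoeff m)); rewrite mcoeff_sum_rescale -[RHS]mulr1.
by apply: mulfI; rewrite -mcoeff_msupp.
Qed.

Theorem O2_invariant_in_gen_subalg (f : {mpoly F[4]}) : (2%:R : F) != 0 ->
  O2_invariant f <-> in_gen_subalg q f.
Proof.
move=> two_neq0; split; last exact: in_gen_subalg_O2_invariant.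
move=> inv_f; have /O2_invariantP[inv_xi _] := inv_f.
have -> : f = 2%:R^-1 *: (f + act (xi_mx F) f).
  by rewrite inv_xi -mulr2n -scaler_nat scalerA mulVf ?scale1r.
rewrite xi_symmetrize; apply: in_gen_subalgZ.
rewrite big_seq; apply: big_ind => [|u v|m supp_m].
- exact: in_gen_subalg0.
- exact: in_gen_subalgD.
apply/in_gen_subalgZ/orbit_sum_in_gen_subalg; first exact: finNzRing_gt1.
exact: O2_invariant_balanced inv_f supp_m.
Qed.

End FiniteField.

Theorem theorem1p2 (p : nat) (hp : prime p) (hodd : odd p) (f : {mpoly 'F_p[4]}) :
  O2_invariant f <-> in_gen_subalg p f.
Proof.
have two_neq0 : (2%:R : 'F_p) != 0.
  rewrite -(dvdn_pcharf (pchar_Fp hp)); move: hodd; apply: contraTN.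
  move=> /(dvdn_leq (isT : (0 < 2)%N)) le_p2.
  by rewrite (_ : p = 2%N) //; have := prime_gt1 hp; lia.
by have := O2_invariant_in_gen_subalg f two_neq0; rewrite (card_Fp hp).
Qed.
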